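(* Let $G$ and $H$ be graphs. Suppose that for every vertex $v \in V(H)$ there exists a subgraph embedding $\varphi_v$ of $H$ into $G$ that is induced with respect to $v$. Then $G \xrightarrow{\cap} H$.
   Context: All graphs are finite and simple. For graphs $G_1=(V_1,E_1)$, $G_2=(V_2,E_2)$, their intersection is $G_1\cap G_2=(V_1\cap V_2, E_1\cap E_2)$. For a graph $G=(V,E)$ and an injective map $\alpha$ defined on $V$, $G^{\alpha}$ is the graph with vertex set $\{\alpha(v): v\in V\}$ and edge set $\{\{\alpha(v),\alpha(w)\}: \{v,w\}\in E\}$. We write $G\xrightarrow{\cap} H$ ($H$ is a self-intersection, or si-subgraph, of $G$) if there exist $k\ge 1$ and injective maps $\alpha_1,\dots,\alpha_k$ on $V(G)$ with $H=G^{\alpha_1}\cap\cdots\cap G^{\alpha_k}$; when $H$ is only specified up to isomorphism, this means $H$ is isomorphic to such an intersection. A subgraph embedding of $H$ into $G$ is an injective map $\varphi: V(H)\to V(G)$ such that $\varphi(u)\varphi(w)\in E(G)$ whenever $uw\in E(H)$. It is induced with respect to $v\in V(H)$ if $\varphi(N_H(v)) = N_G(\varphi(v))\cap \varphi(V(H))$. *)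

From mathcomp Require Import all_boot.
Set Implicit Arguments. Unset Strict Implicit. Unset Printing Implicit Defensive.

Definition simple_graph (V : finType) (e : rel V) : Prop :=
  symmetric e /\ irreflexive e.

Definition nbhd (V : finType) (e : rel V) (v : V) : {set V} := [set x | e v x].

Definition subgraph_embedding (W V : finType) (h : rel W) (g : rel V)
    (phi : W -> V) : Prop :=
  injective phi /\ (forall u w, h u w -> g (phi u) (phi w)).

Definition induced_wrt (W V : finType) (h : rel W) (g : rel V)
    (phi : W -> V) (v : W) : Prop :=
  phi @: nbhd h v = nbhd g (phi v) :&: [set phi u | u : W].

Definition img_vertices (V U : finType) (alpha : V -> U) : {set U} :=
  [set alpha v | v : V].
Definition img_edge (V U : finType) (g : rel V) (alpha : V -> U) (x y : U) : bool :=
  [exists v, exists w, [&& g v w, alpha v == x & alpha w == y]].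

(* Intersection G^{alpha_1} ∩ ... ∩ G^{alpha_k} (k >= 1 enforced separately). *)
Definition inter_vertices (V U : finType) (k : nat) (alpha : 'I_k -> V -> U) : {set U} :=
  \bigcap_(i < k) img_vertices (alpha i).
Definition inter_edge (V U : finType) (g : rel V) (k : nat) (alpha : 'I_k -> V -> U)
    (x y : U) : bool :=
  [forall i, img_edge g (alpha i) x y].

(* G -->∩ H : H is isomorphic to an intersection of k >= 1 injective copies of G.
   The copies live in an (existentially chosen) finite ambient vertex type U. *)
Definition si_subgraph (V : finType) (g : rel V) (W : finType) (h : rel W) : Prop :=
  exists (U : finType) (k : nat) (alpha : 'I_k -> V -> U),
    [/\ (0 < k)%N,
        (forall i, injective (alpha i)) &
        exists f : W -> U,
          [/\ injective f,
              [set f w | w : W] = inter_vertices alpha &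
              forall u w, h u w = inter_edge g alpha (f u) (f w)]].

(* Take one copy of G per embedding phi_v, relabelled so that phi_v(w) becomes the
   common vertex w and every vertex outside the image of phi_v becomes a vertex
   private to that copy.  Using each copy twice, no private vertex survives the
   intersection, whose vertex set is therefore V(H).  Every copy contains the edges
   of H, and a non-edge vw of H is missing from the copy of phi_v because phi_v is
   induced with respect to v. *)

From mathcomp Require Import all_boot.
From Stdlib Require Import ClassicalEpsilon.

Set Implicit Arguments.
Unset Strict Implicit.
Unset Printing Implicit Defensive.

Lemma induced_wrt_edge (W V : finType) (h : rel W) (g : rel V) (phi : W -> V) (v w : W) :
  subgraph_embedding h g phi -> induced_wrt h g phi v ->
  g (phi v) (phi w) -> h v w.
Proof.
move=> [phi_inj _] phi_ind gvw.
have : phi w \in nbhd g (phi v) :&: [set phi u | u : W].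
  by rewrite !inE gvw imset_f.
by rewrite -phi_ind => /imsetP [u]; rewrite inE => hvu /phi_inj ->.
Qed.

Section Relabel.

Variables (W V I : finType) (psi : W -> V) (i : I).

Definition relabel (x : V) : W + I * V :=
  if [pick w | psi w == x] is Some w then inl w else inr (i, x).

Lemma relabel_inr (x : V) (p : I * V) : relabel x = inr p -> p.1 = i.
Proof. by rewrite /relabel; case: pickP => [w _|_] // [<-]. Qed.

Lemma relabel_inj : injective relabel.
Proof.
move=> x y; rewrite /relabel.
by case: pickP => [w /eqP <-|_]; case: pickP => [w' /eqP <-|_] // [->].
Qed.

Hypothesis psi_inj : injective psi.

Lemma relabel_eq_inl (x : V) (u : W) : (relabel x == inl u) = (x == psi u).
Proof.
rewrite /relabel; case: pickP => [w /eqP <-|no_preimage] /=.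
  by apply/eqP/eqP => [[->] | /psi_inj ->].
by have := no_preimage u; rewrite /= eq_sym => ->.
Qed.

Lemma relabel_psi (u : W) : relabel (psi u) = inl u.
Proof. by apply/eqP; rewrite relabel_eq_inl. Qed.

Lemma img_edge_relabel (g : rel V) (u w : W) :
  img_edge g relabel (inl u) (inl w) = g (psi u) (psi w).
Proof.
apply/existsP/idP => [[x /existsP [y /and3P [gxy]]] | guw].
  by rewrite !relabel_eq_inl => /eqP <- /eqP <-.
by exists (psi u); apply/existsP; exists (psi w); rewrite guw !relabel_eq_inl !eqxx.
Qed.

End Relabel.

Lemma si_subgraph_of_family (V W I : finType) (g : rel V) (h : rel W)
    (psi : I -> W -> V) :
  1 < #|I| -> (forall i, injective (psi i)) ->
  (forall u w, h u w = [forall i, g (psi i u) (psi i w)]) ->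
  si_subgraph g h.
Proof.
move=> /card_gt1P [i1 [i2 [_ _ i12]]] psi_inj h_inter.
pose alpha (j : 'I_#|I|) := relabel (psi (enum_val j)) (enum_val j).
have forall_enum (P : pred I) : [forall j : 'I_#|I|, P (enum_val j)] = [forall i, P i].
  apply/forallP/forallP => P_all i //.
  by have := P_all (enum_rank i); rewrite enum_rankK.
exists (W + I * V)%type, #|I|, alpha.
split=> [|j|]; [by apply/card_gt0P; exists i1 | exact: relabel_inj |].
exists inl; split=> [u w [] //||].
- rewrite /inter_vertices /img_vertices.
  apply/setP => -[w|[i x]]; apply/imsetP/bigcapP.
  + by move=> _ j _; apply/imsetP; exists (psi (enum_val j) w);
      rewrite /alpha ?relabel_psi.
  + by move=> _; exists w.
  + by case.
  pose j := enum_rank (if i1 == i then i2 else i1).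
  move=> /(_ j isT) /imsetP [y _] /esym /relabel_inr /=.
  rewrite enum_rankK.
  by case: eqP => [<- /eqP|ne /esym //]; rewrite (negbTE i12).
- move=> u w; rewrite h_inter /inter_edge -forall_enum.
  by apply: eq_forallb => j; rewrite /alpha img_edge_relabel.
Qed.

Theorem mainTheorem1 (V : finType) (g : rel V) (W : finType) (h : rel W) :
  simple_graph g -> simple_graph h ->
  (forall v : W, exists phi : W -> V,
      subgraph_embedding h g phi /\ induced_wrt h g phi v) ->
  si_subgraph g h.
Proof.
move=> _ _ /choice [phi phi_emb].
have [psi0 psi0_emb] : exists psi0 : W -> V, subgraph_embedding h g psi0.
  case: (posnP #|W|) => [W0 | /card_gt0P [w0 _]].
    by exists (ffun0 W0); split=> u; have := fintype0 u.
  by exists (phi w0); exact: (phi_emb w0).1.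
(* The index None keeps the family nonempty when H has no vertices. *)
pose psi (i : option W * bool) := if i.1 is Some v then phi v else psi0.
have psi_emb (i : option W * bool) : subgraph_embedding h g (psi i).
  by rewrite /psi; case: i.1 => [v|]; [exact: (phi_emb v).1 | exact: psi0_emb].
apply: (@si_subgraph_of_family _ _ _ g h psi).
- by rewrite card_prod card_option card_bool mulSn.
- by move=> i; case: (psi_emb i).
- move=> u w; apply/idP/forallP => [huw i | g_all]; first exact: (psi_emb i).2.
  exact: (induced_wrt_edge (phi_emb u).1 (phi_emb u).2 (g_all (Some u, true))).
Qed.
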